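(* $$\sum_{k=1}^\infty\frac{(35k^2-316k+43)8^k}{k\binom{4k}k}=108+\frac{15}2\pi.$$ *)

From Stdlib Require Import Reals.
From Coquelicot Require Import Coquelicot.
Open Scope R_scope.

Definition lemma2p4_term (k : nat) : R :=
  (35 * INR k ^ 2 - 316 * INR k + 43) * 8 ^ k / (INR k * Binomial.C (4 * k) k).

From Stdlib Require Import Reals Lra Lia Factorial.
From Coquelicot Require Import Coquelicot.
Open Scope R_scope.

(* Since [1 / (k C(4k, k)) = B(k, 3k + 1)], the k-th term is the integral over [0, 1] of
   [P(k) 8^k x^(k-1) (1-x)^(3k)], so the series is the integral of
   [8 (1-x)^3 sum_n P(n+1) tau(x)^n] with [tau(x) = 8x(1-x)^3 <= 27/32].  The inner power
   series has rational sum, with an explicit remainder of size [O(N^2 (27/32)^N)] uniformly in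
   x, which justifies exchanging sum and integral.  The resulting rational integrand has an
   elementary antiderivative; [pi] enters through its arctangent part, since
   [2 (1 - tau x) = (4x^2 - 6x + 1)^2 + (2x - 1)^2]. *)

Lemma is_RInt_derive_eq (F f : R -> R) (a b l : R) :
  (forall x, Rmin a b <= x <= Rmax a b -> is_derive F x (f x)) ->
  (forall x, Rmin a b <= x <= Rmax a b -> continuous f x) ->
  F b - F a = l -> is_RInt f a b l.
Proof. intros HF Hf <-; exact (is_RInt_derive F f a b HF Hf). Qed.

Lemma is_RInt_scal_ext (f h : R -> R) (a b c lf l : R) :
  is_RInt f a b lf -> (forall x, h x = c * f x) -> l = c * lf -> is_RInt h a b l.
Proof.
  intros Hf Hh ->.
  exact (is_RInt_ext _ _ _ _ _ (fun x _ => eq_sym (Hh x)) (is_RInt_scal _ _ _ c _ Hf)).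
Qed.

Lemma is_RInt_lincomb (f g h : R -> R) (a b c d lf lg l : R) :
  is_RInt f a b lf -> is_RInt g a b lg ->
  (forall x, h x = c * f x + d * g x) -> l = c * lf + d * lg ->
  is_RInt h a b l.
Proof.
  intros Hf Hg Hh ->.
  refine (is_RInt_ext _ _ _ _ _ (fun x _ => eq_sym (Hh x)) _).
  exact (is_RInt_plus _ _ _ _ _ _ (is_RInt_scal _ _ _ c _ Hf) (is_RInt_scal _ _ _ d _ Hg)).
Qed.

Lemma is_RInt_sum_n (f : nat -> R -> R) (I : nat -> R) (a b : R) (N : nat) :
  (forall n, is_RInt (f n) a b (I n)) ->
  is_RInt (fun x => sum_n (fun n => f n x) N) a b (sum_n I N).
Proof.
  intros HI; induction N as [|N IH].
  - rewrite sum_O; apply (is_RInt_ext (f 0%nat)); [|exact (HI 0%nat)].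
    now intros x _; rewrite sum_O.
  - rewrite sum_Sn; refine (is_RInt_ext _ _ _ _ _ _ (is_RInt_plus _ _ _ _ _ _ IH (HI (S N)))).
    now intros x _; rewrite sum_Sn.
Qed.

Lemma is_series_RInt_unif (f : nat -> R -> R) (g : R -> R) (I : nat -> R) (J : R)
    (e : nat -> R) (a b : R) :
  a <= b ->
  (forall n, is_RInt (f n) a b (I n)) -> is_RInt g a b J ->
  (forall N x, a <= x <= b -> Rabs (g x - sum_n (fun n => f n x) N) <= e N) ->
  is_lim_seq e 0 ->
  is_series I J.
Proof.
  intros Hab HI Hg He He0.
  assert (Hdist : forall N, Rabs (sum_n I N - J) <= (b - a) * e N).
  { intros N.
    pose proof (is_RInt_minus _ _ _ _ _ _ Hg (is_RInt_sum_n f I a b N HI)) as Hdiff.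
    rewrite Rabs_minus_sym.
    exact (norm_RInt_le_const (V := R_NormedModule)
             (fun x => g x - sum_n (fun n => f n x) N) a b _ (e N) Hab (He N) Hdiff). }
  assert (Hlim : is_lim_seq (fun N => (b - a) * e N) 0).
  { replace (Finite 0) with (Rbar_mult (b - a) 0) by (simpl; f_equal; ring).
    now apply is_lim_seq_scal_l. }
  change (is_lim_seq (sum_n I) J).
  apply (is_lim_seq_le_le (fun N => J - (b - a) * e N) _ (fun N => J + (b - a) * e N)).
  - intros N; specialize (Hdist N); apply Rabs_le_between in Hdist; lra.
  - replace (Finite J) with (Rbar_minus J 0) by (simpl; f_equal; ring).
    apply is_lim_seq_minus'; [apply is_lim_seq_const | exact Hlim].
  - replace (Finite J) with (Rbar_plus J 0) by (simpl; f_equal; ring).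
    apply is_lim_seq_plus'; [apply is_lim_seq_const | exact Hlim].
Qed.

Lemma is_lim_seq_pow_geom (c : R) (k : nat) (q : R) :
  0 < c -> 0 < q < 1 -> is_lim_seq (fun n => (INR n + c) ^ k * q ^ n) 0.
Proof.
  intros Hc Hq.
  set (a n := (INR n + c) ^ k * q ^ n).
  assert (Ha : forall n, 0 < a n).
  { intros n; pose proof (pos_INR n); apply Rmult_lt_0_compat; apply pow_lt; lra. }
  assert (Hinv : is_lim_seq (fun n => / (INR n + c)) 0).
  { replace (Finite 0) with (Rbar_inv p_infty) by reflexivity.
    apply is_lim_seq_inv; [|discriminate].
    apply (is_lim_seq_le_p_loc INR); [|exact is_lim_seq_INR].
    exists 0%nat; intros n _; lra. }
  assert (Hratio : is_lim_seq (fun n => Rabs (a (S n) / a n)) q).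
  { apply (is_lim_seq_ext (fun n => q * (1 + / (INR n + c)) ^ k)).
    - intros n; pose proof (Ha n); pose proof (pos_INR n).
      rewrite Rabs_pos_eq by (apply Rlt_le, Rdiv_lt_0_compat; auto).
      unfold a; rewrite S_INR.
      replace (1 + / (INR n + c)) with ((INR n + 1 + c) * / (INR n + c)) by (field; lra).
      rewrite Rpow_mult_distr, pow_inv, <- tech_pow_Rmult.
      assert ((INR n + c) ^ k <> 0) by (apply pow_nonzero; lra).
      assert (q ^ n <> 0) by (apply pow_nonzero; lra).
      field; auto.
    - replace (Finite q) with (Finite ((fun y => q * (1 + y) ^ k) 0))
        by (f_equal; cbv beta; rewrite Rplus_0_r, pow1; ring).
      apply (is_lim_seq_continuous (fun y => q * (1 + y) ^ k)); [reg | exact Hinv]. }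
  apply is_lim_seq_abs_0.
  apply (ex_series_lim_0 (fun n => Rabs (a n))), (ex_series_DAlembert a q); [lra| |exact Hratio].
  intros n; specialize (Ha n); lra.
Qed.

Lemma is_RInt_beta (a b : nat) :
  is_RInt (fun x => x ^ a * (1 - x) ^ b) 0 1
    (INR (fact a) * INR (fact b) / INR (fact (a + b + 1))).
Proof.
  revert b; induction a as [|a IH]; intros b.
  - pose proof (pos_INR b).
    apply (is_RInt_derive_eq (fun x => - (1 - x) ^ S b / (INR b + 1))).
    + intros x _; auto_derive; [lra|].
      change (match b with 0%nat => 1 | S _ => INR b + 1 end) with (INR (S b)).
      rewrite S_INR; unfold Rminus; field; lra.
    + intros x _; apply continuity_pt_filterlim; reg.
    + rewrite Rminus_diag, Rminus_0_r, pow1, pow_i by lia.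
      replace (0 + b + 1)%nat with (S b) by lia.
      rewrite fact_simpl, mult_INR, S_INR; simpl (INR (fact 0)).
      pose proof (INR_fact_neq_0 b); field; lra.
  - assert (Hparts : is_RInt (fun x => INR (S a) * (x ^ a * (1 - x) ^ S b)
                                      - INR (S b) * (x ^ S a * (1 - x) ^ b)) 0 1 0).
    { apply (is_RInt_derive_eq (fun x => x ^ S a * (1 - x) ^ S b)).
      - intros x _; auto_derive; [trivial|].
        change (match a with 0%nat => 1 | S _ => INR a + 1 end) with (INR (S a)).
        change (match b with 0%nat => 1 | S _ => INR b + 1 end) with (INR (S b)).
        unfold Rminus; simpl pow; ring.
      - intros x _; apply continuity_pt_filterlim; reg.
      - rewrite Rminus_diag, !pow_i by lia; ring. }
    pose proof (pos_INR a); pose proof (pos_INR b).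
    apply (is_RInt_lincomb _ _ _ 0 1 (INR (S a) / INR (S b)) (- / INR (S b)) _ _ _ (IH (S b)) Hparts).
    + intros x; rewrite !S_INR; unfold Rminus; simpl pow; field; lra.
    + replace (a + S b + 1)%nat with (S a + b + 1)%nat by lia.
      rewrite !fact_simpl, !mult_INR, !S_INR.
      pose proof (INR_fact_neq_0 (S a + b + 1)); field; lra.
Qed.

Definition P (m : R) : R := 35 * m ^ 2 - 316 * m + 43.

(* For [|T| < 1], [P_tail m T / (1 - T)^3] is the sum of [P (m + j) T^j] over [j >= 0]. *)
Definition P_tail (m T : R) : R :=
  P m * (1 - T) ^ 2 + (70 * m - 281) * T * (1 - T) + 70 * T ^ 2.

Lemma P_tail_shift (m T : R) : P_tail m T - T * P_tail (m + 1) T = P m * (1 - T) ^ 3.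
Proof. unfold P_tail, P; ring. Qed.

Lemma sum_P_geom (m T : R) (N : nat) :
  (1 - T) ^ 3 * sum_n (fun n => P (INR n + m) * T ^ n) N
  = P_tail m T - T ^ S N * P_tail (INR (S N) + m) T.
Proof.
  induction N as [|N IH].
  - rewrite sum_O; simpl INR.
    rewrite Rplus_0_l, (Rplus_comm 1 m).
    replace ((1 - T) ^ 3 * (P m * T ^ 0)) with (P m * (1 - T) ^ 3) by ring.
    rewrite <- P_tail_shift; ring.
  - rewrite sum_Sn; change plus with Rplus.
    rewrite Rmult_plus_distr_l, IH.
    set (M := INR (S N) + m).
    replace (INR (S (S N)) + m) with (M + 1) by (unfold M; rewrite (S_INR (S N)); ring).
    replace ((1 - T) ^ 3 * (P M * T ^ S N)) with (P M * (1 - T) ^ 3 * T ^ S N) by ring.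
    rewrite <- P_tail_shift, <- (tech_pow_Rmult T (S N)); ring.
Qed.

Lemma P_tail_bound (m T : R) : 1 <= m -> 0 <= T <= 1 -> Rabs (P_tail m T) <= 815 * m ^ 2.
Proof.
  intros Hm HT; unfold P_tail, P.
  assert (0 <= (1 - T) ^ 2 <= 1) by (split; nra).
  assert (0 <= T * (1 - T) <= 1) by (split; nra).
  assert (0 <= T ^ 2 <= 1) by (split; nra).
  apply Rabs_le; split; nra.
Qed.

Definition tau (x : R) : R := 8 * x * (1 - x) ^ 3.

Lemma one_minus_tau (x : R) :
  2 * (1 - tau x) = (4 * x ^ 2 - 6 * x + 1) ^ 2 + (2 * x - 1) ^ 2.
Proof. unfold tau; ring. Qed.

Lemma tau_lt_1 (x : R) : tau x < 1.
Proof.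
  pose proof (one_minus_tau x).
  assert (0 < (4 * x ^ 2 - 6 * x + 1) ^ 2 + (2 * x - 1) ^ 2); [|lra].
  destruct (Req_dec (2 * x - 1) 0) as [Hx|Hx].
  - replace x with (1 / 2) by lra; lra.
  - pose proof (pow2_ge_0 (4 * x ^ 2 - 6 * x + 1)).
    pose proof (pow2_gt_0 _ Hx); lra.
Qed.

Lemma tau_range (x : R) : 0 <= x <= 1 -> 0 <= tau x <= 27 / 32.
Proof.
  intros Hx; unfold tau.
  assert (0 <= (1 - x) ^ 3) by (apply pow_le; lra).
  assert (0 <= (4 * x - 1) ^ 2 * (16 * x ^ 2 - 40 * x + 27)).
  { apply Rmult_le_pos; [apply pow2_ge_0 | nra]. }
  split; nra.
Qed.

Definition term_integrand (n : nat) (x : R) : R :=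
  8 * (1 - x) ^ 3 * (P (INR n + 1) * tau x ^ n).

Lemma term_integrand_RInt (n : nat) :
  is_RInt (term_integrand n) 0 1 (lemma2p4_term (S n)).
Proof.
  apply (is_RInt_scal_ext _ _ _ _ (P (INR n + 1) * 8 ^ S n) _ _ (is_RInt_beta n (3 * S n))).
  - intros x; unfold term_integrand, tau.
    rewrite pow_mult, !Rpow_mult_distr, <- !tech_pow_Rmult; ring.
  - unfold lemma2p4_term, Binomial.C.
    replace (4 * S n - S n)%nat with (3 * S n)%nat by lia.
    replace (n + 3 * S n + 1)%nat with (4 * S n)%nat by lia.
    rewrite fact_simpl, mult_INR, S_INR.
    pose proof (pos_INR n); pose proof (INR_fact_neq_0 n).
    pose proof (INR_fact_neq_0 (3 * S n)); pose proof (INR_fact_neq_0 (4 * S n)).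
    unfold P; field; repeat split; auto; lra.
Qed.

Definition sum_integrand (x : R) : R :=
  8 * (1 - x) ^ 3 * P_tail 1 (tau x) / (1 - tau x) ^ 3.

Lemma sum_integrand_remainder (N : nat) (x : R) :
  sum_integrand x - sum_n (fun n => term_integrand n x) N
  = 8 * ((1 - x) / (1 - tau x)) ^ 3 * tau x ^ S N * P_tail (INR (S N) + 1) (tau x).
Proof.
  pose proof (tau_lt_1 x).
  replace (sum_n (fun n => term_integrand n x) N)
    with (8 * (1 - x) ^ 3 * sum_n (fun n => P (INR n + 1) * tau x ^ n) N)
    by (symmetry; exact (sum_n_scal_l (K := R_Ring) (V := R_ModuleSpace) _ _ N)).
  replace (sum_n (fun n => P (INR n + 1) * tau x ^ n) N)
    with ((P_tail 1 (tau x) - tau x ^ S N * P_tail (INR (S N) + 1) (tau x)) / (1 - tau x) ^ 3)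
    by (rewrite <- sum_P_geom; field; lra).
  unfold sum_integrand; field; lra.
Qed.

Lemma sum_integrand_error (N : nat) (x : R) : 0 <= x <= 1 ->
  Rabs (sum_integrand x - sum_n (fun n => term_integrand n x) N)
  <= 8 * (32 / 5) ^ 3 * 815 * ((INR N + 2) ^ 2 * (27 / 32) ^ N).
Proof.
  intros Hx; rewrite sum_integrand_remainder.
  pose proof (tau_range x Hx) as Ht.
  assert (Hr : 0 <= ((1 - x) / (1 - tau x)) ^ 3 <= (32 / 5) ^ 3).
  { assert (0 <= (1 - x) / (1 - tau x) <= 32 / 5); [|split; [apply pow_le | apply pow_incr]; lra].
    split; [apply Rdiv_le_0_compat; lra|].
    apply Rmult_le_reg_r with (1 - tau x); [lra|].
    unfold Rdiv; rewrite Rmult_assoc, Rinv_l; lra. }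
  assert (Ht' : 0 <= tau x ^ S N <= (27 / 32) ^ N).
  { split; [apply pow_le; lra|].
    assert (tau x ^ N <= (27 / 32) ^ N) by (apply pow_incr; lra).
    assert (0 <= tau x ^ N) by (apply pow_le; lra).
    simpl; nra. }
  assert (Hp : Rabs (P_tail (INR (S N) + 1) (tau x)) <= 815 * (INR N + 2) ^ 2).
  { replace (INR N + 2) with (INR (S N) + 1) by (rewrite S_INR; ring).
    pose proof (pos_INR (S N)); apply P_tail_bound; lra. }
  assert (Hrt : ((1 - x) / (1 - tau x)) ^ 3 * tau x ^ S N <= (32 / 5) ^ 3 * (27 / 32) ^ N)
    by (apply Rmult_le_compat; lra).
  pose proof (Rabs_pos (P_tail (INR (S N) + 1) (tau x))).
  assert (0 <= ((1 - x) / (1 - tau x)) ^ 3 * tau x ^ S N) by (apply Rmult_le_pos; lra).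
  rewrite Rabs_mult, Rabs_pos_eq by lra.
  nra.
Qed.

Definition antideriv_core (x : R) : R :=
  (-160 + 555 * x + 2517 * x ^ 2 - 14436 * x ^ 3 + 26160 * x ^ 4 - 23016 * x ^ 5
   + 10152 * x ^ 6 - 1824 * x ^ 7) / (1 - tau x) ^ 2
  - 43 / 4 * ln (1 - tau x).

(* Two branches of one antiderivative: the angle of [(2x - 1, 4x^2 - 6x + 1)] turns by
   exactly [pi] over [0, 1], so neither arctangent formula is smooth on the whole interval;
   the first is used on [0, 1/3] and the second on [1/3, 1]. *)
Definition antideriv_lo (x : R) : R :=
  antideriv_core x + 15 / 2 * atan ((4 * x ^ 2 - 6 * x + 1) / (2 * x - 1)).

Definition antideriv_hi (x : R) : R :=
  antideriv_core x - 15 / 2 * atan ((2 * x - 1) / (4 * x ^ 2 - 6 * x + 1)).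

Lemma antideriv_lo_derive (x : R) : 2 * x - 1 <> 0 ->
  is_derive antideriv_lo x (sum_integrand x).
Proof.
  intros Hx; pose proof (tau_lt_1 x); pose proof (one_minus_tau x).
  unfold antideriv_lo, antideriv_core, sum_integrand, P_tail, P, tau in *.
  auto_derive.
  - repeat split; try apply Rmult_integral_contrapositive_currified;
      try rewrite Rmult_1_r; lra || (intro; apply Hx; lra) || (intro; lra).
  - field; repeat split; (intro; apply Hx; lra) || (intro; lra).
Qed.

Lemma antideriv_hi_derive (x : R) : 4 * x ^ 2 - 6 * x + 1 <> 0 ->
  is_derive antideriv_hi x (sum_integrand x).
Proof.
  intros Hx; pose proof (tau_lt_1 x); pose proof (one_minus_tau x).
  unfold antideriv_hi, antideriv_core, sum_integrand, P_tail, P, tau in *.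
  auto_derive.
  - repeat split; try apply Rmult_integral_contrapositive_currified;
      try rewrite Rmult_1_r; lra || (intro; apply Hx; lra) || (intro; lra).
  - field; repeat split; (intro; apply Hx; lra) || (intro; lra).
Qed.

Lemma sum_integrand_continuous (x : R) : continuous sum_integrand x.
Proof.
  pose proof (tau_lt_1 x); apply continuity_pt_filterlim.
  unfold sum_integrand, P_tail, P, tau in *; reg.
  apply pow_nonzero; lra.
Qed.

Lemma sum_integrand_RInt : is_RInt sum_integrand 0 1 (108 + 15 / 2 * PI).
Proof.
  assert (Hlo : is_RInt sum_integrand 0 (1 / 3) (antideriv_lo (1 / 3) - antideriv_lo 0)).
  { apply (is_RInt_derive_eq antideriv_lo); [|intros; apply sum_integrand_continuous | reflexivity].
    intros x Hx; rewrite Rmin_left, Rmax_right in Hx by lra.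
    apply antideriv_lo_derive; lra. }
  assert (Hhi : is_RInt sum_integrand (1 / 3) 1 (antideriv_hi 1 - antideriv_hi (1 / 3))).
  { apply (is_RInt_derive_eq antideriv_hi); [|intros; apply sum_integrand_continuous | reflexivity].
    intros x Hx; rewrite Rmin_left, Rmax_right in Hx by lra.
    apply antideriv_hi_derive; intro; nra. }
  replace (108 + 15 / 2 * PI)
    with ((antideriv_lo (1 / 3) - antideriv_lo 0) + (antideriv_hi 1 - antideriv_hi (1 / 3)));
    [exact (is_RInt_Chasles _ _ _ _ _ _ Hlo Hhi)|].
  unfold antideriv_lo, antideriv_hi, antideriv_core, tau.
  replace ((4 * (1 / 3) ^ 2 - 6 * (1 / 3) + 1) / (2 * (1 / 3) - 1)) with (5 / 3) by field.
  replace ((2 * (1 / 3) - 1) / (4 * (1 / 3) ^ 2 - 6 * (1 / 3) + 1)) with (/ (5 / 3)) by field.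
  replace ((4 * 0 ^ 2 - 6 * 0 + 1) / (2 * 0 - 1)) with (- (1)) by field.
  replace ((2 * 1 - 1) / (4 * 1 ^ 2 - 6 * 1 + 1)) with (- (1)) by field.
  replace (1 - 8 * 0 * (1 - 0) ^ 3) with 1 by ring.
  replace (1 - 8 * 1 * (1 - 1) ^ 3) with 1 by ring.
  rewrite ln_1, atan_inv, atan_opp, atan_1 by lra.
  field.
Qed.

Theorem lemma2p4 :
  is_series (fun n : nat => lemma2p4_term (S n)) (108 + 15 / 2 * PI).
Proof.
  set (C := 8 * (32 / 5) ^ 3 * 815).
  apply (is_series_RInt_unif term_integrand sum_integrand _ _
           (fun N => C * ((INR N + 2) ^ 2 * (27 / 32) ^ N)) 0 1).
  - lra.
  - exact term_integrand_RInt.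
  - exact sum_integrand_RInt.
  - intros N x Hx; exact (sum_integrand_error N x Hx).
  - replace (Finite 0) with (Rbar_mult C 0) by (simpl; f_equal; ring).
    apply is_lim_seq_scal_l, is_lim_seq_pow_geom; lra.
Qed.
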